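(* If a formula $\varphi(x)$ of the correspondence language is logically equivalent to $ST_{22}(I,x)$ for some modal intuitionistic formula $I$, then there exists $k\in\mathbb{N}$ such that $\varphi(x)$ is invariant with respect to $(2,2)$-modal $k$-asimulations.
   Context: Correspondence language: classical first-order logic without identity over $\Sigma=\{R,R_\Box,R_\Diamond,P_1,P_2,\dots\}$ ($R,R_\Box,R_\Diamond$ binary, $P_n$ unary); $\varphi(x)$ has only $x$ free. $\Theta$ is a subset of $\Sigma$ containing $R,R_\Box,R_\Diamond$; $\Theta$-models $M_k=\langle U_k,\iota_k\rangle$, with $R_k=\iota_k(R)$, $R_{\Box k}=\iota_k(R_\Box)$, $R_{\Diamond k}=\iota_k(R_\Diamond)$. $\Sigma_\varphi=\{R,R_\Box,R_\Diamond\}\cup\{P_n:P_n\text{ occurs in }\varphi\}$. $a\models_k\varphi(x)$ means $\varphi$ holds in $M_k$ under assignments sending $x$ to $a$. $s\overset{\leftrightarrow}{A}t$ means $sAt$ and $tAs$. Modal intuitionistic formulas: built from $p_n,\bot$ with $\wedge,\vee,\to,\Box,\Diamond$. $ST_{22}(p_n,x)=P_n(x)$, $ST_{22}(\bot,x)=\bot$, commutes with $\wedge,\vee$; $ST_{22}(I\to J,x)=\forall y(R(x,y)\to(ST_{22}(I,y)\to ST_{22}(J,y)))$; $ST_{22}(\Box I,x)=\forall y(R(x,y)\to\forall z(R_\Box(y,z)\to ST_{22}(I,z)))$; $ST_{22}(\Diamond I,x)=\forall y(R(x,y)\to\exists z(R_\Diamond(y,z)\wedge ST_{22}(I,z)))$.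 A $(2,2)$-modal $\langle(M_1,t),(M_2,u)\rangle_k$-asimulation, for pointed $\Theta$-models, is a pair $(A,B)$ of relations on finite nonempty tuples such that, for all $i,j\in\{1,2\}$, $m$, $\bar a_m,a,c,e\in U_i$, $\bar b_m,b,d,f\in U_j$, unary $P\in\Theta$: $A,B\subseteq\bigcup_{n>0}((U_1^n\times U_2^n)\cup(U_2^n\times U_1^n))$; $tAu$; if $(\bar a_m,a)A(\bar b_m,b)$ and $a\models_iP(x)$ then $b\models_jP(x)$; if $(\bar a_m,a)A(\bar b_m,b)$, $bR_jd$, $m<k$ then some $c\in U_i$ has $aR_ic$ and $(\bar a_m,a,c)\overset{\leftrightarrow}{A}(\bar b_m,b,d)$; if $(\bar a_m,a)A(\bar b_m,b)$, $bR_jd$, $dR_{\Box j}f$, $m+1<k$ then some $c,e\in U_i$ have $aR_ic$, $cR_{\Box i}e$, $(\bar a_m,a,c,e)A(\bar b_m,b,d,f)$; if $(\bar a_m,a)A(\bar b_m,b)$, $bR_jd$, $m+1<k$ then some $c\in U_i$ has $aR_ic$ and $(\bar a_m,a,c)B(\bar b_m,b,d)$; if $(\bar a_m,a)B(\bar b_m,b)$, $aR_{\Diamond i}c$, $m<k$ then some $d\in U_j$ has $bR_{\Diamond j}d$ and $(\bar a_m,a,c)A(\bar b_m,b,d)$. $\varphi(x)$ is invariant with respect to $(2,2)$-modal $k$-asimulations iff for every $\Theta\supseteq\Sigma_\varphi$, all pointed $\Theta$-models $(M_1,t),(M_2,u)$, every such $(A,B)$, and all $a\in U_1,b\in U_2$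 with $aAb$ (one-element tuples): $a\models_1\varphi(x)$ implies $b\models_2\varphi(x)$. *)

From Stdlib Require Import List Arith.
Import ListNotations.
Set Implicit Arguments.

Inductive form : Type :=
| FBot : form
| FR   : nat -> nat -> form
| FRB  : nat -> nat -> form
| FRD  : nat -> nat -> form
| FP   : nat -> nat -> form          (* P_n(v) *)
| FNot : form -> form
| FAnd : form -> form -> form
| FOr  : form -> form -> form
| FImp : form -> form -> form
| FAll : nat -> form -> form
| FEx  : nat -> form -> form.

Fixpoint free (v : nat) (f : form) : Prop :=
  match f with
  | FBot => False
  | FR a b | FRB a b | FRD a b => v = a \/ v = b
  | FP _ a => v = a
  | FNot g => free v g
  | FAnd g h | FOr g h | FImp g h => free v g \/ free v h
  | FAll w g | FEx w g => v <> w /\ free v g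
  end.

Fixpoint occursP (n : nat) (f : form) : Prop :=
  match f with
  | FBot | FR _ _ | FRB _ _ | FRD _ _ => False
  | FP m _ => n = m
  | FNot g => occursP n g
  | FAnd g h | FOr g h | FImp g h => occursP n g \/ occursP n h
  | FAll _ g | FEx _ g => occursP n g
  end.

(** Sigma-models (interpretation of all symbols; a Theta-model is recovered by
    ignoring the predicates outside Theta, which never matter below). *)
Record model : Type := Model {
  carrier :> Type;
  iR  : carrier -> carrier -> Prop;
  iRB : carrier -> carrier -> Prop;
  iRD : carrier -> carrier -> Prop;
  iP  : nat -> carrier -> Prop }.

Definition upd {U : Type} (env : nat -> U) (v : nat) (a : U) : nat -> U :=
  fun w => if Nat.eqb w v then a else env w.

Fixpoint holds (M : model) (env : nat -> M) (f : form) : Prop :=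
  match f with
  | FBot => False
  | FR a b => iR M (env a) (env b)
  | FRB a b => iRB M (env a) (env b)
  | FRD a b => iRD M (env a) (env b)
  | FP n a => iP M n (env a)
  | FNot g => ~ holds M env g
  | FAnd g h => holds M env g /\ holds M env h
  | FOr g h => holds M env g \/ holds M env h
  | FImp g h => holds M env g -> holds M env h
  | FAll v g => forall a : M, holds M (upd env v a) g
  | FEx v g => exists a : M, holds M (upd env v a) g
  end.

Definition sat (M : model) (f : form) (x : nat) (a : M) : Prop :=
  forall env : nat -> M, env x = a -> holds M env f.

Inductive mi_form : Type :=
| MVar : nat -> mi_form
| MBot : mi_form
| MAnd : mi_form -> mi_form -> mi_form
| MOr  : mi_form -> mi_form -> mi_form
| MImp : mi_form -> mi_form -> mi_form
| MBox : mi_form -> mi_form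
| MDia : mi_form -> mi_form.

(** Bound variables y, z are chosen as x+1, x+2 (fresh w.r.t. x; the free
    variable of ST22 I x is only x and all bound variables exceed x). *)
Fixpoint ST22 (I : mi_form) (x : nat) : form :=
  match I with
  | MVar n => FP n x
  | MBot => FBot
  | MAnd J K => FAnd (ST22 J x) (ST22 K x)
  | MOr J K => FOr (ST22 J x) (ST22 K x)
  | MImp J K =>
      FAll (S x) (FImp (FR x (S x)) (FImp (ST22 J (S x)) (ST22 K (S x))))
  | MBox J =>
      FAll (S x) (FImp (FR x (S x))
        (FAll (S (S x)) (FImp (FRB (S x) (S (S x))) (ST22 J (S (S x))))))
  | MDia J =>
      FAll (S x) (FImp (FR x (S x))
        (FEx (S (S x)) (FAnd (FRD (S x) (S (S x))) (ST22 J (S (S x))))))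
  end.

Definition log_equiv (f g : form) : Prop :=
  forall (M : model) (env : nat -> M), holds M env f <-> holds M env g.

(** The two models are indexed by a side i : bool (true = M1, false = M2).
    A nonempty tuple (a_1,...,a_m,a) is represented by the pair (l, a) with
    l = [a_1;...;a_m]; so m = length l.  A relation on tuples is given as a
    family  A i j l a l' b  relating an i-side tuple to a j-side tuple. *)
Definition side (M1 M2 : model) (i : bool) : model := if i then M1 else M2.

Definition tuple_rel (M1 M2 : model) : Type :=
  forall i j : bool, list (side M1 M2 i) -> side M1 M2 i ->
                     list (side M1 M2 j) -> side M1 M2 j -> Prop.

Definition asimulation (Theta : nat -> Prop) (M1 : model) (t : M1)
    (M2 : model) (u : M2) (k : nat) (A B : tuple_rel M1 M2) : Prop :=
  (forall i j l a l' b, A i j l a l' b -> i <> j /\ length l = length l') /\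
  (forall i j l a l' b, B i j l a l' b -> i <> j /\ length l = length l') /\
  A true false [] t [] u /\
  (forall i j l a l' b n, Theta n -> A i j l a l' b ->
      iP (side M1 M2 i) n a -> iP (side M1 M2 j) n b) /\
  (forall i j l a l' b (d : side M1 M2 j), A i j l a l' b ->
      iR _ b d -> length l < k ->
      exists c : side M1 M2 i, iR _ a c /\
        A i j (l ++ [a]) c (l' ++ [b]) d /\ A j i (l' ++ [b]) d (l ++ [a]) c) /\
  (forall i j l a l' b (d f : side M1 M2 j), A i j l a l' b ->
      iR _ b d -> iRB _ d f -> length l + 1 < k ->
      exists c e : side M1 M2 i, iR _ a c /\ iRB _ c e /\
        A i j (l ++ [a; c]) e (l' ++ [b; d]) f) /\
  (forall i j l a l' b (d : side M1 M2 j), A i j l a l' b ->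
      iR _ b d -> length l + 1 < k ->
      exists c : side M1 M2 i, iR _ a c /\ B i j (l ++ [a]) c (l' ++ [b]) d) /\
  (forall i j l a l' b (c : side M1 M2 i), B i j l a l' b ->
      iRD _ a c -> length l < k ->
      exists d : side M1 M2 j, iRD _ b d /\ A i j (l ++ [a]) c (l' ++ [b]) d).

Definition invariant_22 (f : form) (x k : nat) : Prop :=
  forall (Theta : nat -> Prop), (forall n, occursP n f -> Theta n) ->
  forall (M1 M2 : model) (t : M1) (u : M2) (A B : tuple_rel M1 M2),
    asimulation Theta t u k A B ->
    forall (a : M1) (b : M2), A true false [] a [] b ->
      sat M1 f x a -> sat M2 f x b.

From Stdlib Require Import List Arith Lia.
Import ListNotations.

(* Since phi is equivalent to ST22 I x, the truth of phi at w is the Kripke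
   truth of I at w, and the latter is transported along A by induction on I,
   as long as the tuple length plus the modal depth of I stays below k: an
   implication consumes the two-way R-step, a box the R;R_Box-step and a
   diamond the passage A -> B -> A.  Letters of I that do not occur in phi
   need not lie in Theta; they are neutralised by reinterpreting every P_n
   with n outside Theta as the full predicate, which leaves phi untouched. *)

Fixpoint mi_sat (M : model) (I : mi_form) (w : M) : Prop :=
  match I with
  | MVar n => iP M n w
  | MBot => False
  | MAnd J K => mi_sat M J w /\ mi_sat M K w
  | MOr J K => mi_sat M J w \/ mi_sat M K w
  | MImp J K => forall v, iR M w v -> mi_sat M J v -> mi_sat M K v
  | MBox J => forall v, iR M w v -> forall z, iRB M v z -> mi_sat M J z
  | MDia J => forall v, iR M w v -> exists z, iRD M v z /\ mi_sat M J z
  end.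

Fixpoint mi_depth (I : mi_form) : nat :=
  match I with
  | MVar _ | MBot => 0
  | MAnd J K | MOr J K => max (mi_depth J) (mi_depth K)
  | MImp J K => S (max (mi_depth J) (mi_depth K))
  | MBox J | MDia J => S (S (mi_depth J))
  end.

Definition with_preds (M : model) (P : nat -> M -> Prop) : model :=
  @Model (carrier M) (iR M) (iRB M) (iRD M) P.

Definition restrict_preds (Theta : nat -> Prop) (M : model) : model :=
  with_preds M (fun n w => Theta n -> iP M n w).

Lemma upd_eq {U : Type} (env : nat -> U) v a : upd env v a v = a.
Proof. unfold upd. now rewrite Nat.eqb_refl. Qed.

Lemma upd_neq {U : Type} (env : nat -> U) v a w : w <> v -> upd env v a w = env w.
Proof. intros Hwv. unfold upd. now destruct (Nat.eqb_spec w v). Qed.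

Ltac simpl_upd := repeat (rewrite upd_eq in * || rewrite upd_neq in * by lia).

Lemma holds_ST22 (M : model) (I : mi_form) :
  forall x (env : nat -> M), holds M env (ST22 I x) <-> mi_sat M I (env x).
Proof.
  induction I as [n| |J IHJ K IHK|J IHJ K IHK|J IHJ K IHK|J IHJ|J IHJ];
    intros x env; simpl; try tauto.
  - now rewrite IHJ, IHK.
  - now rewrite IHJ, IHK.
  - split.
    + intros H v Hv. specialize (H v). rewrite IHJ, IHK in H. simpl_upd. auto.
    + intros H v. rewrite IHJ, IHK. simpl_upd. auto.
  - split.
    + intros H v Hv z. specialize (H v). simpl_upd. specialize (H Hv z).
      rewrite IHJ in H. simpl_upd. exact H.
    + intros H v Hv z. rewrite IHJ. simpl_upd. eauto.
  - split.
    + intros H v Hv. specialize (H v). simpl_upd.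
      destruct (H Hv) as [z Hz]. rewrite IHJ in Hz. simpl_upd. eauto.
    + intros H v Hv. simpl_upd. destruct (H v Hv) as [z Hz].
      exists z. rewrite IHJ. simpl_upd. exact Hz.
Qed.

Lemma holds_with_preds (M : model) (P : nat -> M -> Prop) (f : form) :
  (forall n, occursP n f -> forall w, iP M n w <-> P n w) ->
  forall env : nat -> M, holds M env f <-> holds (with_preds M P) env f.
Proof.
  induction f; intros HP env; simpl in *; try tauto.
  - now apply HP.
  - now rewrite IHf.
  - rewrite IHf1, IHf2; auto; tauto.
  - rewrite IHf1, IHf2; auto; tauto.
  - rewrite IHf1, IHf2; auto; tauto.
  - split; intros H a; apply (IHf HP (upd env n a)); auto.
  - split; intros [a H]; exists a; apply (IHf HP (upd env n a)); auto.
Qed.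

Lemma sat_restrict_preds_ST22 (Theta : nat -> Prop) (phi : form) (I : mi_form)
    (x : nat) :
  (forall n, occursP n phi -> Theta n) -> log_equiv phi (ST22 I x) ->
  forall (M : model) (w : M), sat M phi x w <-> mi_sat (restrict_preds Theta M) I w.
Proof.
  intros HTheta HI M w.
  assert (Hphi : forall env : nat -> M,
             holds M env phi <-> mi_sat (restrict_preds Theta M) I (env x)).
  { intros env. rewrite (holds_with_preds M (fun n w => Theta n -> iP M n w) phi).
    - now rewrite (HI (restrict_preds Theta M)), holds_ST22.
    - intros n Hn w'. split; auto. }
  split.
  - intros Hs. apply (Hphi (fun _ => w)), Hs. reflexivity.
  - intros Hm env Henv. apply Hphi. now rewrite Henv.
Qed.

Lemma mi_sat_asimulation {Theta : nat -> Prop} {M1 M2 : model} {t : M1} {u : M2}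
    {k : nat} {A B : tuple_rel M1 M2} :
  asimulation Theta t u k A B -> forall I : mi_form,
  forall i j l a l' b, A i j l a l' b -> length l + mi_depth I <= k ->
  mi_sat (restrict_preds Theta (side M1 M2 i)) I a ->
  mi_sat (restrict_preds Theta (side M1 M2 j)) I b.
Proof.
  intros (Hlen & _ & _ & Hatom & Hstep & Hbox & HstepB & Hdia).
  induction I as [n| |J IHJ K IHK|J IHJ K IHK|J IHJ K IHK|J IHJ|J IHJ];
    intros i j l a l' b Hab Hk; simpl in *.
  - intros Ha Hn. eapply Hatom; eauto.
  - easy.
  - intros [? ?]; split; [eapply IHJ | eapply IHK]; eauto; lia.
  - intros [? | ?]; [left; eapply IHJ | right; eapply IHK]; eauto; lia.
  - intros Ha d Hd HJ.
    destruct (Hstep _ _ _ _ _ _ d Hab Hd) as (c & Hc & Hcd & Hdc); [lia|].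
    destruct (Hlen _ _ _ _ _ _ Hab) as [_ Hll'].
    eapply IHK; [exact Hcd | rewrite length_app; simpl; lia |].
    (* The antecedent travels back along the reversed link (d, c). *)
    apply Ha; [exact Hc |].
    eapply IHJ; [exact Hdc | rewrite length_app; simpl; lia | exact HJ].
  - intros Ha d Hd f Hf.
    destruct (Hbox _ _ _ _ _ _ d f Hab Hd Hf) as (c & e & Hc & He & Hef); [lia|].
    eapply IHJ; [exact Hef | rewrite length_app; simpl; lia |].
    eapply Ha; eauto.
  - intros Ha d Hd.
    destruct (HstepB _ _ _ _ _ _ d Hab Hd) as (c & Hc & Bcd); [lia|].
    destruct (Ha c Hc) as (z & Hz & HJ).
    destruct (Hdia _ _ _ _ _ _ z Bcd Hz) as (d' & Hd' & Hzd');
      [rewrite length_app; simpl; lia|].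
    exists d'. split; [exact Hd' |].
    eapply IHJ; [exact Hzd' | rewrite !length_app; simpl; lia | exact HJ].
Qed.

Theorem corollary1 (phi : form) (x : nat) :
  (forall v, free v phi -> v = x) ->
  (exists I : mi_form, log_equiv phi (ST22 I x)) ->
  exists k : nat, invariant_22 phi x k.
Proof.
  intros _ [I HI]. exists (mi_depth I).
  intros Theta HTheta M1 M2 t u A B HAB a b Hab Ha.
  rewrite (sat_restrict_preds_ST22 _ _ _ _ HTheta HI) in Ha |- *.
  exact (mi_sat_asimulation HAB I true false [] a [] b Hab (le_n _) Ha).
Qed.
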